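(* Let $K\ge2$. The capacity region of the $K$-receiver combination network with nested messages $M_{\overline{K}}$ (required by receivers $[1:K-1]$) and $M_{[1:K]}$ (required by all receivers) is the set of rate pairs $(R_{\overline{K}},R_{[1:K]})$ with $R_{[1:K]}\le C_{\mathsf{W}_K^{\mathsf{P}}}$ and $R_{[1:K]}+R_{\overline{K}}\le C_{\mathsf{W}_j^{\mathsf{P}}}$ for all $j\in[1:K-1]$.
   Context: The $K$-receiver combination network with capacities $C_S\ge0$, $S\in\mathsf{P}$ ($\mathsf{P}$ = nonempty subsets of $[1:K]$): deterministic broadcast channel with input $X=(V_S:S\in\mathsf{P})$, $|\mathcal{V}_S|=2^{C_S}$, and outputs $Y_i=(V_S:S\in\mathsf{W}_i^{\mathsf{P}})$ where $\mathsf{W}_i^{\mathsf{P}}=\{T\in\mathsf{P}:i\in T\}$. Messages independent, each required by the indicated receivers; achievability and capacity region as usual. $C_{\mathsf{W}}=\sum_{S\in\mathsf{W}}C_S$; $\overline{K}$ denotes $[1:K]\setminus\{K\}$. *)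

From Stdlib Require Import Reals.
From mathcomp Require Import all_boot.

Set Implicit Arguments.
Unset Strict Implicit.
Unset Printing Implicit Defensive.

Local Open Scope R_scope.

(* Receivers are 'I_K (receiver k of the paper, k in [1:K], is the ordinal
   with value k-1).  Links are indexed by subsets S of 'I_K; the link
   V_S has alphabet of size a S = 2^{C_S} (for S nonempty).  The empty set
   is not a link of the network: we give it a trivial (size 1) alphabet
   so that it carries nothing. *)

Definition link_size (K : nat) (a : {set 'I_K} -> nat) (S : {set 'I_K}) : nat :=
  if S == set0 then 1%nat else a S.

Definition cap (K : nat) (a : {set 'I_K} -> nat) (S : {set 'I_K}) : R :=
  ln (INR (a S)) / ln 2.

Definition capW (K : nat) (a : {set 'I_K} -> nat) (i : 'I_K) : R :=
  \big[Rplus/0]_(T : {set 'I_K} | (T != set0) && (i \in T)) cap a T.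

Definition chan_block (K : nat) (a : {set 'I_K} -> nat) (n : nat) : Type :=
  forall S : {set 'I_K}, 'I_n -> 'I_(link_size a S).

(* A decoding map at receiver i is a function of X^n that only depends on
   Y_i^n = (V_S^n : S in W_i^P). *)
Definition observes (K : nat) (a : {set 'I_K} -> nat) (n : nat) (i : 'I_K)
  (T : Type) (d : chan_block a n -> T) : Prop :=
  forall x y : chan_block a n,
    (forall (S : {set 'I_K}) (t : 'I_n), i \in S -> x S t = y S t) -> d x = d y.

Definition Rceil (x : R) : Z := (- Int_part (- x))%Z.

Definition msg_size (n : nat) (r : R) : nat :=
  Z.to_nat (Rceil (Rpower 2 (INR n * r))).

Definition is_last (K : nat) (i : 'I_K) : bool := (val i == K.-1)%nat.

(* Number of message pairs (w1, w2) in error for code (enc, d1, d2):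
   w1 is message M_{Kbar} (required by receivers 1..K-1),
   w2 is message M_{[1:K]} (required by all receivers). *)
Definition n_errors (K : nat) (a : {set 'I_K} -> nat) (n m1 m2 : nat)
  (enc : 'I_m1 -> 'I_m2 -> chan_block a n)
  (d1 : 'I_K -> chan_block a n -> 'I_m1)
  (d2 : 'I_K -> chan_block a n -> 'I_m2) : nat :=
  #|[set w : 'I_m1 * 'I_m2 |
      [exists i : 'I_K,
         ((~~ is_last i) && (d1 i (enc w.1 w.2) != w.1))
         || (d2 i (enc w.1 w.2) != w.2)]]|.

Definition err_prob (K : nat) (a : {set 'I_K} -> nat) (n m1 m2 : nat)
  (enc : 'I_m1 -> 'I_m2 -> chan_block a n)
  (d1 : 'I_K -> chan_block a n -> 'I_m1)
  (d2 : 'I_K -> chan_block a n -> 'I_m2) : R :=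
  INR (n_errors enc d1 d2) / INR (m1 * m2).

(* (R1, R2) = (R_{Kbar}, R_{[1:K]}) is achievable: there is a sequence of
   (2^{nR1}, 2^{nR2}, n) codes whose error probability tends to 0. *)
Definition achievable (K : nat) (a : {set 'I_K} -> nat) (R1 R2 : R) : Prop :=
  0 <= R1 /\ 0 <= R2 /\
  forall eps : R, 0 < eps ->
  exists N : nat, forall n : nat, (N <= n)%nat ->
  exists (enc : 'I_(msg_size n R1) -> 'I_(msg_size n R2) -> chan_block a n)
         (d1 : 'I_K -> chan_block a n -> 'I_(msg_size n R1))
         (d2 : 'I_K -> chan_block a n -> 'I_(msg_size n R2)),
    (forall i, observes i (d1 i)) /\ (forall i, observes i (d2 i)) /\
    err_prob enc d1 d2 <= eps.

Definition in_capacity_region (K : nat) (a : {set 'I_K} -> nat) (R1 R2 : R) : Prop :=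
  forall delta : R, 0 < delta ->
  exists r1 r2 : R, achievable a r1 r2 /\ Rabs (r1 - R1) < delta /\ Rabs (r2 - R2) < delta.

From HB Require Import structures.
From Stdlib Require Import Reals Lra Classical ZArith.
From mathcomp Require Import all_boot.

Set Implicit Arguments.
Unset Strict Implicit.
Unset Printing Implicit Defensive.

(* Converse: receiver i observes one of 2^{n C_{W_i}} channel outputs.  A code
   with error probability at most 1/2 decodes at least half of the message
   pairs correctly; on those, the output of a receiver j < K determines the
   pair (M_Kbar, M_[1:K]), and the output of receiver K together with M_Kbar
   determines M_[1:K].  Hence 2^{n (R_Kbar + R_[1:K])} and 2^{n R_[1:K]} grow
   at most like 2^{n C_{W_j}} and 2^{n C_{W_K}}.

   Achievability: rate splitting and random binary coding.  M_Kbar is cut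
   into a block index and an offset of rate mu; the links seen by receiver K
   carry random bits of (block index, M_[1:K]), all other links random bits
   of the full pair.  Receiver K then needs R_Kbar - mu + R_[1:K] < C_{W_K};
   receiver j < K needs R_Kbar + R_[1:K] < C_{W_j}, and mu below the capacity
   of the links it sees and receiver K does not.  Averaging the union bound on
   colliding codewords over all binary codes yields a good deterministic code,
   and mu = max(0, R_Kbar + R_[1:K] - C_{W_K}) meets every constraint because
   C_{W_j} is at most that hidden capacity plus C_{W_K}. *)

Lemma card_bool_ffun_agree (U : finType) (u v : U) : u != v ->
  (#|[set g : {ffun U -> bool} | g u == g v]| * 2 = 2 ^ #|U|)%N.
Proof.
move=> nuv.
pose flip (g : {ffun U -> bool}) := [ffun x => if x == v then ~~ g x else g x].
have flipK : involutive flip.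
  by move=> g; apply/ffunP=> x; rewrite !ffunE; case: (x == v) => //=; rewrite negbK.
set A := [set g | _].
have flipA : flip @: A = ~: A.
  apply/setP=> g; rewrite in_setC; apply/imsetP/idP.
    case=> h; rewrite inE => /eqP Hh ->.
    by rewrite inE !ffunE eqxx (negbTE nuv) Hh; case: (h v).
  move=> Hg; exists (flip g); last by rewrite flipK.
  rewrite inE !ffunE eqxx (negbTE nuv).
  by move: Hg; rewrite inE; case: (g u); case: (g v).
have := cardsC A; rewrite -flipA card_imset; last exact: (can_inj flipK).
by rewrite card_ffun card_bool => <-; rewrite muln2 -addnn.
Qed.

Lemma card_ffun_agree_on (P U : finType) (Q : {set P}) (x y : P -> U) :
  (#|[set R : {ffun P -> {ffun U -> bool}} | [forall p in Q, R p (x p) == R p (y p)]]|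
    * 2 ^ #|[set p in Q | x p != y p]| = 2 ^ (#|U| * #|P|))%N.
Proof.
pose F p := if p \in Q then [pred g : {ffun U -> bool} | g (x p) == g (y p)] else predT.
have -> : #|[set R : {ffun P -> {ffun U -> bool}} | [forall p in Q, R p (x p) == R p (y p)]]|
          = #|(finfun.family F : simpl_pred {dffun forall p : P, {ffun U -> bool}})|.
  apply: eq_card => R; rewrite inE; apply/forall_inP/familyP.
    by move=> H p; rewrite /F; case: ifP => // /H.
  by move=> H p Qp; have := H p; rewrite /F Qp.
rewrite card_family foldrE big_image /=.
have -> : (2 ^ #|[set p in Q | x p != y p]|
           = \prod_(p : P) (if (p \in Q) && (x p != y p) then 2 else 1))%N.
  by rewrite -big_mkcond /= prod_nat_const; congr (_ ^ _); apply: eq_card => p; rewrite inE.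
rewrite expnM -prod_nat_const -big_split /=.
apply: eq_bigr => p _; rewrite /F.
case: (p \in Q) => /=; last by rewrite muln1 cardT -cardE card_ffun card_bool.
case: (eqVneq (x p) (y p)) => [->|nxy] /=.
  by rewrite muln1 -card_bool -card_ffun; apply: eq_card => g; exact: eqxx.
by rewrite -(card_bool_ffun_agree nxy); congr (_ * _)%N; apply: eq_card => g; rewrite inE.
Qed.

Lemma sum_ge1 (T : finType) (P : pred T) (F : T -> nat) x :
  P x -> (0 < F x)%N -> (1 <= \sum_(y | P y) F y)%N.
Proof. by move=> Px Fx; rewrite (bigD1 x) //=; exact: leq_trans Fx (leq_addr _ _). Qed.

Lemma sum_bool_card (T : finType) (P : pred T) :
  (\sum_(x : T) (P x : nat) = #|[set x | P x]|)%N.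
Proof.
by rewrite -sum1_card [RHS]big_mkcond /=; apply: eq_bigr => x _; rewrite inE; case: (P x).
Qed.

Definition inj_of_card_le (A B : finType) (h : (#|A| <= #|B|)%N) (x : A) : B :=
  enum_val (widen_ord h (enum_rank x)).

Lemma inj_of_card_le_inj (A B : finType) (h : (#|A| <= #|B|)%N) :
  injective (inj_of_card_le h).
Proof.
by move=> x y /enum_val_inj /(congr1 val) /= /val_inj; exact: enum_rank_inj.
Qed.

Lemma expn_pow m k : Nat.pow m k = (m ^ k)%N.
Proof. by elim: k => [|k IH] //=; rewrite expnS IH. Qed.

Local Open Scope R_scope.

Lemma Rplus_associative : associative Rplus. Proof. by move=> x y z; rewrite Rplus_assoc. Qed.
HB.instance Definition _ := Monoid.isComLaw.Build R 0 Rplus Rplus_associative Rplus_comm Rplus_0_l.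

Lemma INR_sum (I : finType) (P : pred I) (f : I -> nat) :
  INR (\sum_(i | P i) f i)%N = \big[Rplus/0]_(i | P i) INR (f i).
Proof. by apply: (big_morph INR) => //; exact: plus_INR. Qed.

Lemma Rsum_le (I : finType) (P : pred I) (F G : I -> R) :
  (forall i, P i -> F i <= G i) ->
  \big[Rplus/0]_(i | P i) F i <= \big[Rplus/0]_(i | P i) G i.
Proof. by move=> H; apply: big_ind2 => //; [lra | move=> *; lra]. Qed.

Lemma Rsum_mulr (I : finType) (P : pred I) (F : I -> R) c :
  \big[Rplus/0]_(i | P i) (F i * c) = (\big[Rplus/0]_(i | P i) F i) * c.
Proof. by apply: (big_ind2 (fun x y => x = y * c)) => //; [lra | move=> *; subst; lra]. Qed.

Lemma Rsum_const (I : finType) (P : pred I) c :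
  \big[Rplus/0]_(i | P i) c = INR #|P| * c.
Proof. by rewrite -sum1_card INR_sum -Rsum_mulr; apply: eq_bigr => *; rewrite Rmult_1_l. Qed.

Lemma leq_INR (x y : nat) : (x <= y)%N -> INR x <= INR y.
Proof. by move/leP; apply: le_INR. Qed.

Lemma INR_expn2_gt0 d : 0 < INR (2 ^ d).
Proof. by apply: lt_0_INR; apply/ltP; rewrite expn_gt0. Qed.

Lemma inv_INR_expn2_le d d' : (d' <= d)%N -> / INR (2 ^ d) <= / INR (2 ^ d').
Proof.
move=> h; apply: Rinv_le_contravar; first exact: INR_expn2_gt0.
by apply: leq_INR; apply: leq_pexp2l.
Qed.

Lemma exists_le_average (T : finType) (x0 : T) (f : T -> R) B :
  \big[Rplus/0]_(x : T) f x <= INR #|{: T}| * B -> exists x, f x <= B.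
Proof.
move=> H; apply: NNPP => Hn.
have Hlt x : B < f x by apply: Rnot_le_lt => Hx; apply: Hn; exists x.
move: H; rewrite -Rsum_const (bigD1 x0) //= [X in _ <= X](bigD1 x0) //=.
have := Rsum_le (P := fun x => x != x0) (F := fun _ => B) (G := f) (fun x _ => Rlt_le _ _ (Hlt x)).
have := Hlt x0; lra.
Qed.

Lemma link_size_gt0 K (a : {set 'I_K} -> nat) :
  (forall S : {set 'I_K}, S != set0 -> (0 < a S)%N) -> forall S, (0 < link_size a S)%N.
Proof. by move=> ha S; rewrite /link_size; case: ifP => // /negbT; apply: ha. Qed.

Section RandomCode.
Variables (K : nat) (a : {set 'I_K} -> nat) (n m1 m2 L : nat) (k0 : 'I_K).
Hypotheses (m1_gt0 : (0 < m1)%N) (m2_gt0 : (0 < m2)%N) (L_gt0 : (0 < L)%N).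
Hypothesis last_is_k0 : forall i : 'I_K, is_last i = (i == k0).
Hypothesis link_size_pos : forall S, (0 < link_size a S)%N.

Definition nbits S := Nat.log2 (link_size a S ^ n).

Lemma expn2_nbits_le S : (2 ^ nbits S <= link_size a S ^ n)%N.
Proof.
have h : (0 < link_size a S ^ n)%coq_nat by apply/ltP; rewrite expn_gt0 link_size_pos.
by have [h1 _] := Nat.log2_spec _ h; apply/leP; rewrite -expn_pow.
Qed.

Lemma card_link_bits_le S :
  (#|{ffun 'I_(nbits S) -> bool}| <= #|{ffun 'I_n -> 'I_(link_size a S)}|)%N.
Proof. by rewrite !card_ffun !card_ord card_bool; exact: expn2_nbits_le. Qed.

Definition embed_bits S : {ffun 'I_(nbits S) -> bool} -> {ffun 'I_n -> 'I_(link_size a S)} :=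
  inj_of_card_le (card_link_bits_le S).

Definition maxbits := (\max_(S : {set 'I_K}) nbits S).+1.

Lemma nbits_lt_max S : (nbits S < maxbits)%N.
Proof. by rewrite ltnS; apply: (leq_bigmax S). Qed.

Local Notation Pos := ({set 'I_K} * 'I_maxbits)%type.
Local Notation Msg := ('I_m1 * 'I_m2)%type.
(* A binary code assigns a bit to every (link, bit position) and message pair;
   positions beyond [nbits S] are unused. *)
Local Notation code := {ffun Pos -> {ffun Msg -> bool}}.

(* M_Kbar = w1 is split as w1 = L * block w1 + offset; receiver K only sees
   functions of (block w1, w2). *)
Definition block (w1 : 'I_m1) : 'I_m1 := Ordinal (leq_ltn_trans (leq_div w1 L) (ltn_ord w1)).
Definition link_input (S : {set 'I_K}) (w : Msg) : Msg := if k0 \in S then (block w.1, w.2) else w.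
Definition link_bits (R : code) (S : {set 'I_K}) (w : Msg) : {ffun 'I_(nbits S) -> bool} :=
  [ffun t : 'I_(nbits S) => R (S, inord t) (link_input S w)].
Definition code_enc (R : code) (w1 : 'I_m1) (w2 : 'I_m2) : chan_block a n :=
  fun S t => embed_bits (link_bits R S (w1, w2)) t.

Definition agree_at (i : 'I_K) (x y : chan_block a n) : bool :=
  [forall S : {set 'I_K}, [forall t : 'I_n, (i \in S) ==> (x S t == y S t)]].
Definition code_dec (R : code) i (x : chan_block a n) : Msg :=
  odflt (Ordinal m1_gt0, Ordinal m2_gt0) [pick w : Msg | agree_at i (code_enc R w.1 w.2) x].
Definition code_dec1 R i x := (code_dec R i x).1.
Definition code_dec2 R i x := (code_dec R i x).2.

Lemma code_dec_observes R i (x y : chan_block a n) :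
  (forall (S : {set 'I_K}) (t : 'I_n), i \in S -> x S t = y S t) -> code_dec R i x = code_dec R i y.
Proof.
move=> H; rewrite /code_dec; congr odflt; apply: eq_pick => w.
apply/forallP/forallP => H1 S; apply/forallP => t; have := forallP (H1 S) t;
  case: (boolP (i \in S)) => //= iS /eqP ->; by rewrite H.
Qed.

Definition seen_positions i := [set p : Pos | (i \in p.1) && (p.2 < nbits p.1)%N].
Definition collide (R : code) i (w w' : Msg) :=
  [forall p in seen_positions i, R p (link_input p.1 w) == R p (link_input p.1 w')].

(* Receiver K only needs w2, so among the pairs sharing w2 and the block of w1
   it suffices to count one representative: the block start. *)
Definition block_start (x : 'I_m1) := (x %% L == 0)%N.
Definition confusable i (w w' : Msg) :=
  if i == k0 then (w'.2 != w.2) && block_start w'.1 else w' != w.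

Lemma agree_collide R i (w w' : Msg) :
  agree_at i (code_enc R w'.1 w'.2) (code_enc R w.1 w.2) -> collide R i w w'.
Proof.
move=> /forallP H; apply/forall_inP => -[S t]; rewrite inE /= => /andP [iS tb].
have E : embed_bits (link_bits R S w') = embed_bits (link_bits R S w).
  apply/ffunP => t'; have := forallP (H S) t'; rewrite iS /= => /eqP.
  by case: w w' {H} => w1 w2 [w1' w2'].
move/inj_of_card_le_inj/ffunP: E => /(_ (Ordinal tb)); rewrite !ffunE.
have -> : inord (Ordinal tb) = t.
  by apply: val_inj; rewrite /= inordK // (ltn_trans tb (nbits_lt_max S)).
by move=> ->; exact: eqxx.
Qed.

Definition start_of (x : 'I_m1) : 'I_m1 :=
  Ordinal (leq_ltn_trans (leq_divM x L) (ltn_ord x)).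

Lemma block_start_of x : block (start_of x) = block x.
Proof. by apply: val_inj; rewrite /= mulnK. Qed.

Lemma block_start_start_of x : block_start (start_of x).
Proof. by rewrite /block_start /= modnMl. Qed.

Lemma n_errors_le_collisions R :
  (n_errors (code_enc R) (code_dec1 R) (code_dec2 R) <=
   \sum_(w : Msg) \sum_(i : 'I_K) \sum_(w' : Msg | confusable i w w') collide R i w w')%N.
Proof.
rewrite /n_errors -sum1_card big_mkcond /=; apply: leq_sum => w _.
case: ifP => // /[!inE] /existsP [i Hi].
rewrite (bigD1 i) //=; apply: leq_trans (leq_addr _ _).
move: Hi; rewrite /code_dec1 /code_dec2 /code_dec.
case: pickP => [w'' Hag | Hn]; last first.
  exfalso; have := Hn w; rewrite /agree_at.
  by move/negbT/negP; apply; apply/forallP=> S; apply/forallP=> t; rewrite eqxx implybT.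
rewrite /= last_is_k0 /confusable.
have Hc := agree_collide Hag.
case: (eqVneq i k0) => [ik|nik] /=.
  move=> H2; apply: (@sum_ge1 _ _ _ (start_of w''.1, w''.2)) => /=.
    by rewrite H2 block_start_start_of.
  move: Hc => /forall_inP Hc; rewrite lt0b; apply/forall_inP => p Hp.
  have := Hc p Hp; move: Hp; rewrite inE ik => /andP [kp _].
  by rewrite /link_input kp /= block_start_of.
move=> H; apply: (@sum_ge1 _ _ _ w''); rewrite ?lt0b //.
by case: w H {Hag Hc} => w1 w2; case: w'' => x y /=; apply: contraTneq => -[-> ->]; rewrite !eqxx.
Qed.

Definition ndiffer i (w w' : Msg) :=
  #|[set p in seen_positions i | link_input p.1 w != link_input p.1 w']|.

Lemma card_collide i w w' :
  (#|[set R : code | collide R i w w']| * 2 ^ ndiffer i w w' = #|{: code}|)%N.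
Proof.
have := card_ffun_agree_on (seen_positions i)
  (fun p : Pos => link_input p.1 w) (fun p : Pos => link_input p.1 w').
rewrite card_ffun card_ffun card_bool -expnM mulnC => <-.
by rewrite /ndiffer /collide mulnC; congr (_ * _)%N; apply: eq_card => R; rewrite !inE.
Qed.

Lemma card_positions (P : pred {set 'I_K}) :
  #|[set p : Pos | P p.1 && (p.2 < nbits p.1)%N]| = (\sum_(S | P S) nbits S)%N.
Proof.
rewrite -sum1_card (eq_bigl (fun p : Pos => P p.1 && (p.2 < nbits p.1)%N)); last first.
  by move=> p; rewrite inE.
rewrite -(pair_big_dep P (fun S (t : 'I_maxbits) => (t < nbits S)%N) (fun _ _ => 1%N)) /=.
apply: eq_bigr => S _.
by rewrite (big_ord_narrow (F := fun _ => 1%N) (ltnW (nbits_lt_max S))) sum1_card card_ord.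
Qed.

Lemma sum_errors_le :
  \big[Rplus/0]_(R : code) INR (n_errors (code_enc R) (code_dec1 R) (code_dec2 R)) <=
  INR #|{: code}| * \big[Rplus/0]_(w : Msg) \big[Rplus/0]_(i : 'I_K)
      \big[Rplus/0]_(w' : Msg | confusable i w w') / INR (2 ^ ndiffer i w w').
Proof.
apply: Rle_trans (Rsum_le (G := fun R => INR (\sum_(w : Msg) \sum_(i : 'I_K)
  \sum_(w' : Msg | confusable i w w') collide R i w w')) _) _.
  by move=> R _; apply: leq_INR; apply: n_errors_le_collisions.
rewrite -INR_sum exchange_big /= INR_sum [X in _ <= X]Rmult_comm -Rsum_mulr.
apply: Rsum_le => w _; rewrite exchange_big /= INR_sum -Rsum_mulr.
apply: Rsum_le => i _; rewrite exchange_big /= INR_sum -Rsum_mulr.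
apply: Rsum_le => w' _; rewrite sum_bool_card.
have := card_collide i w w'; move/(congr1 INR); rewrite mult_INR => <-.
have := INR_expn2_gt0 (ndiffer i w w') => h.
by right; rewrite Rmult_comm Rmult_assoc Rinv_r ?Rmult_1_r //; lra.
Qed.

Definition hidden_positions i :=
  [set p : Pos | ((i \in p.1) && (k0 \notin p.1)) && (p.2 < nbits p.1)%N].
Definition nblocks := #|[set x : 'I_m1 | block_start x]|.

Lemma confusions_last_le w :
  \big[Rplus/0]_(w' : Msg | confusable k0 w w') / INR (2 ^ ndiffer k0 w w') <=
  INR (nblocks * (m2 - 1)) * / INR (2 ^ #|seen_positions k0|).
Proof.
have -> : \big[Rplus/0]_(w' : Msg | confusable k0 w w') / INR (2 ^ ndiffer k0 w w') =
          \big[Rplus/0]_(w' : Msg | confusable k0 w w') / INR (2 ^ #|seen_positions k0|).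
  apply: eq_bigr => w'; rewrite /confusable eqxx => /andP [ne _]; congr (/ INR (2 ^ _)).
  rewrite /ndiffer; apply: eq_card => p; rewrite !inE.
  rewrite /link_input; case: (k0 \in p.1) => //=; case: (_ < _)%N => //=.
  by apply/eqP => -[_ E]; move: ne; rewrite E eqxx.
rewrite Rsum_const; apply: Rmult_le_compat_r.
  exact/Rlt_le/Rinv_0_lt_compat/INR_expn2_gt0.
apply: leq_INR; rewrite /nblocks subn1 -[m2 in m2.-1]card_ord -(cardC1 w.2) -cardX.
by rewrite leq_eqVlt; apply/orP; left; apply/eqP;
  apply: eq_card => -[x y]; rewrite !inE /confusable eqxx /= andbC.
Qed.

Definition same_block (w w' : Msg) := (block w'.1 == block w.1) && (w'.2 == w.2).

Lemma card_same_block w : (#|[pred w' : Msg | (w' != w) && same_block w w']| <= L - 1)%N.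
Proof.
pose offset (w' : Msg) : 'I_L := Ordinal (ltn_pmod w'.1 L_gt0).
have offset_inj (x y : Msg) : same_block w x -> same_block w y -> offset x = offset y -> x = y.
  case: x y => [x1 x2] [y1 y2]; rewrite /same_block /= =>
    /andP [/eqP bx /eqP ex] /andP [/eqP b_y /eqP ey] /(congr1 val) /= hm.
  have hb : (x1 %/ L = y1 %/ L)%N by move: bx b_y => /(congr1 val) /= -> /(congr1 val) /= ->.
  have -> : x1 = y1 by apply: val_inj; rewrite /= (divn_eq x1 L) (divn_eq y1 L) hb hm.
  by rewrite ex ey.
rewrite -(@card_in_imset _ _ offset); last first.
  by move=> x y /andP [_ hx] /andP [_ hy]; apply: offset_inj.
rewrite subn1 -[L in L.-1]card_ord -(cardC1 (offset w)); apply: subset_leq_card.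
apply/subsetP => _ /imsetP [x /andP [ne sx] ->]; rewrite !inE.
apply: contra ne => /eqP /(offset_inj _ _ sx) -> //.
by rewrite /same_block !eqxx.
Qed.

Lemma confusions_other_le i w : i != k0 ->
  \big[Rplus/0]_(w' : Msg | confusable i w w') / INR (2 ^ ndiffer i w w') <=
  INR (m1 * m2 - 1) * / INR (2 ^ #|seen_positions i|)
  + INR (L - 1) * / INR (2 ^ #|hidden_positions i|).
Proof.
move=> nik; rewrite /confusable (negbTE nik).
have hQ := Rlt_le _ _ (Rinv_0_lt_compat _ (INR_expn2_gt0 #|seen_positions i|)).
have hQb := Rlt_le _ _ (Rinv_0_lt_compat _ (INR_expn2_gt0 #|hidden_positions i|)).
apply: Rle_trans (Rsum_le (G := fun w' =>
   (if same_block w w' then 0 else / INR (2 ^ #|seen_positions i|)) +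
   (if same_block w w' then / INR (2 ^ #|hidden_positions i|) else 0)) _) _.
  move=> w' ne; case sm: (same_block w w') => /=; [rewrite Rplus_0_l | rewrite Rplus_0_r];
    apply: inv_INR_expn2_le; apply: subset_leq_card; apply/subsetP => p; rewrite !inE.
    move=> /andP [/andP [ip kp] tb]; rewrite ip tb /= /link_input (negbTE kp).
    by rewrite eq_sym.
  move=> /andP [ip tb]; rewrite ip tb /= /link_input; case: (k0 \in p.1); last by rewrite eq_sym.
  apply: contraFN sm => /eqP E; rewrite /same_block; apply/andP; split; apply/eqP.
    exact: (esym (congr1 fst E)).
  exact: (esym (congr1 snd E)).
rewrite big_split /=; apply: Rplus_le_compat.
  apply: Rle_trans (Rsum_le (G := fun _ => / INR (2 ^ #|seen_positions i|)) _) _.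
    by move=> w' _; case: (same_block w w'); [exact: hQ | exact: Rle_refl].
  rewrite Rsum_const; apply: Rmult_le_compat_r => //; apply: leq_INR.
  have -> : (m1 * m2 - 1 = #|{: Msg}|.-1)%N by rewrite card_prod !card_ord subn1.
  by rewrite -(cardC1 w).
rewrite -big_mkcondr Rsum_const; apply: Rmult_le_compat_r => //; apply: leq_INR.
exact: card_same_block.
Qed.

Definition union_bound :=
  INR (nblocks * (m2 - 1)) * / INR (2 ^ #|seen_positions k0|) +
  \big[Rplus/0]_(i : 'I_K | i != k0)
     (INR (m1 * m2 - 1) * / INR (2 ^ #|seen_positions i|)
      + INR (L - 1) * / INR (2 ^ #|hidden_positions i|)).

Lemma good_code_exists : exists R : code,
  err_prob (code_enc R) (code_dec1 R) (code_dec2 R) <= union_bound /\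
  (forall i, observes i (code_dec1 R i)) /\ (forall i, observes i (code_dec2 R i)).
Proof.
have per_msg (w : Msg) : \big[Rplus/0]_(i : 'I_K) \big[Rplus/0]_(w' : Msg | confusable i w w')
      / INR (2 ^ ndiffer i w w') <= union_bound.
  rewrite (bigD1 k0) //=; apply: Rplus_le_compat; first exact: confusions_last_le.
  by apply: Rsum_le => i nik; apply: confusions_other_le.
have := Rle_trans _ _ _ sum_errors_le
  (Rmult_le_compat_l _ _ _ (pos_INR _) (Rsum_le (fun w _ => per_msg w))).
rewrite Rsum_const => /(exists_le_average [ffun _ => [ffun _ => true]]) [R HR].
exists R; split; last by split => i x y H; rewrite /code_dec1 /code_dec2 (code_dec_observes R H).
have hpos : 0 < INR (m1 * m2) by apply: lt_0_INR; apply/ltP; rewrite muln_gt0 m1_gt0 m2_gt0.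
apply: (Rmult_le_reg_r (INR (m1 * m2))) => //.
rewrite /err_prob /Rdiv Rmult_assoc Rinv_l; last lra.
by rewrite Rmult_1_r; move: HR; rewrite card_prod !card_ord mult_INR; nra.
Qed.

End RandomCode.

Definition exp2 x := Rpower 2 x.

Lemma exp2_gt0 x : 0 < exp2 x.
Proof. exact: exp_pos. Qed.

Lemma exp2_le x y : x <= y -> exp2 x <= exp2 y.
Proof. by move=> h; apply: Rle_Rpower => //; lra. Qed.

Lemma exp2_ge1 x : 0 <= x -> 1 <= exp2 x.
Proof. by move=> h; rewrite -(Rpower_O 2); [exact: exp2_le | lra]. Qed.

Lemma exp2D x y : exp2 (x + y) = exp2 x * exp2 y.
Proof. exact: Rpower_plus. Qed.

Lemma exp2N x : exp2 (- x) = / exp2 x.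
Proof. exact: Rpower_Ropp. Qed.

Lemma INR_expn2 (q : nat) : INR (2 ^ q)%N = exp2 (INR q).
Proof.
rewrite /exp2 Rpower_pow; last lra.
by rewrite -expn_pow pow_INR; congr (_ ^ _); simpl; ring.
Qed.

Lemma inv_INR_expn2_le_exp2 (q : nat) x : x <= INR q -> / INR (2 ^ q)%N <= exp2 (- x).
Proof. by move=> h; rewrite INR_expn2 -exp2N; apply: exp2_le; lra. Qed.

Lemma ln2_gt0 : 0 < ln 2.
Proof. by rewrite -ln_1; apply: ln_increasing; lra. Qed.

Lemma Rceil_bounds y : y <= IZR (Rceil y) < y + 1.
Proof.
rewrite /Rceil /Int_part opp_IZR minus_IZR.
by have [h1 h2] := archimed (- y); lra.
Qed.

Lemma msg_size_bounds n r : 0 <= r ->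
  (0 < msg_size n r)%N /\ exp2 (INR n * r) <= INR (msg_size n r) < exp2 (INR n * r) + 1.
Proof.
move=> hr; have hy := exp2_ge1 (Rmult_le_pos _ _ (pos_INR n) hr).
have [b1 b2] := Rceil_bounds (exp2 (INR n * r)).
have hz : (0 <= Rceil (exp2 (INR n * r)))%Z by apply: le_IZR; lra.
have E : INR (msg_size n r) = IZR (Rceil (exp2 (INR n * r))).
  by rewrite /msg_size INR_IZR_INZ Z2Nat.id.
rewrite E; split; last lra.
by apply/ltP; apply: INR_lt; rewrite E /=; lra.
Qed.

Lemma msg_size0 n : msg_size n 0 = 1%N.
Proof.
have [h0 [_ h2]] := msg_size_bounds n (Rle_refl 0).
rewrite Rmult_0_r /exp2 Rpower_O in h2; last lra.
by apply/eqP; rewrite eqn_leq h0 andbT -ltnS; apply/ltP; apply: INR_lt; simpl; lra.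
Qed.

Lemma msg_size_le n r : 0 <= r -> INR (msg_size n r) <= 2 * exp2 (INR n * r).
Proof.
move=> hr; have [_ [_ h]] := msg_size_bounds n hr.
by have := exp2_ge1 (Rmult_le_pos _ _ (pos_INR n) hr); lra.
Qed.

Lemma msg_size_pred_le n r : 0 <= r -> INR (msg_size n r - 1) <= exp2 (INR n * r).
Proof.
move=> hr; have [h0 [_ h]] := msg_size_bounds n hr.
by rewrite minus_INR; [simpl; lra | apply/leP].
Qed.

Definition eventually (P : nat -> Prop) := exists N, forall n, (N <= n)%N -> P n.

Lemma eventually_and P Q : eventually P -> eventually Q -> eventually (fun n => P n /\ Q n).
Proof.
move=> [N1 H1] [N2 H2]; exists (maxn N1 N2) => n hn; split.
  by apply: H1; apply: leq_trans hn; apply: leq_maxl.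
by apply: H2; apply: leq_trans hn; apply: leq_maxr.
Qed.

Lemma eventually_forall (T : finType) (P : T -> nat -> Prop) :
  (forall x, eventually (P x)) -> eventually (fun n => forall x, P x n).
Proof.
move=> H; suff [N HN] : eventually (fun n => forall x, x \in enum T -> P x n).
  by exists N => n hn x; apply: HN => //; rewrite mem_enum.
elim: (enum T) => [|y s [N HN]]; first by exists 0%N.
have [N1 H1] := H y; exists (maxn N N1) => n hn x; rewrite inE => /orP [/eqP ->|xs].
  by apply: H1; apply: leq_trans hn; apply: leq_maxr.
by apply: HN => //; apply: leq_trans hn; apply: leq_maxl.
Qed.

Lemma INR_Z_to_nat_ge z : IZR z <= INR (Z.to_nat z).
Proof.
case: (Z_le_gt_dec 0 z) => h; first by rewrite INR_IZR_INZ Z2Nat.id //; exact: Rle_refl.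
by have := IZR_lt _ _ (Z.gt_lt _ _ h); have := pos_INR (Z.to_nat z); lra.
Qed.

Lemma eventually_exp2_decay c d y : 0 < d -> 0 < y ->
  eventually (fun n => c * exp2 (- (INR n * d)) <= y).
Proof.
move=> hd hy; have hL : 0 < d * ln 2 by have := ln2_gt0; nra.
set B := Rabs c / (y * (d * ln 2)).
exists (Z.to_nat (up B)) => n hn.
have hnB : B < INR n.
  have := INR_Z_to_nat_ge (up B); have [h2 _] := archimed B; have := leq_INR hn; lra.
have hc : Rabs c < y * (d * ln 2) * INR n.
  have hp : 0 < y * (d * ln 2) by nra.
  have E : Rabs c = B * (y * (d * ln 2)) by rewrite /B; field; have := ln2_gt0; lra.
  by rewrite [X in X < _]E [X in _ < X]Rmult_comm; exact: Rmult_lt_compat_r hp hnB.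
have he : 1 + INR n * d * ln 2 <= exp2 (INR n * d) by apply: exp_ineq1_le.
rewrite exp2N; have hp := exp2_gt0 (INR n * d).
apply: (Rmult_le_reg_r (exp2 (INR n * d))) => //.
rewrite Rmult_assoc Rinv_l ?Rmult_1_r; last lra.
by have := Rle_abs c; nra.
Qed.

Lemma le_of_exp2_le2 r c :
  eventually (fun n => exp2 (INR n * r) <= 2 * exp2 (INR n * c)) -> r <= c.
Proof.
move=> [N1 H1]; apply: Rnot_lt_le => hlt.
have [N2 H2] := eventually_exp2_decay 1 (ltac:(lra) : 0 < r - c) (ltac:(lra) : 0 < / 4).
pose n := maxn N1 N2.
have hx := exp2_gt0 (INR n * c); have hy := exp2_gt0 (INR n * (r - c)).
have small : exp2 (INR n * (r - c)) <= 2.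
  have := H1 n (leq_maxl _ _).
  have -> : INR n * r = INR n * c + INR n * (r - c) by ring.
  by rewrite exp2D; nra.
have large : 4 <= exp2 (INR n * (r - c)).
  have := H2 n (leq_maxr _ _); rewrite Rmult_1_l exp2N => h.
  by have := Rinv_le_contravar _ _ (Rinv_0_lt_compat _ hy) h; rewrite !Rinv_inv; lra.
lra.
Qed.

Section BitsVersusCapacity.
Variables (K : nat) (a : {set 'I_K} -> nat) (n : nat) (k0 : 'I_K).
Hypothesis ha : forall S : {set 'I_K}, S != set0 -> (0 < a S)%N.

Definition nsets := INR #|{: {set 'I_K}}|.

Definition capW_hidden (i : 'I_K) :=
  \big[Rplus/0]_(T : {set 'I_K} | ((T != set0) && (i \in T)) && (k0 \notin T)) cap a T.

Lemma cap_ge0 S : S != set0 -> 0 <= cap a S.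
Proof.
move=> hS; apply: Rmult_le_pos; last exact/Rlt_le/Rinv_0_lt_compat/ln2_gt0.
rewrite -ln_1; have h1 : 1 <= INR (a S) by apply: (le_INR 1); apply/leP; exact: ha.
case: (Rle_lt_or_eq_dec _ _ h1) => h; last by rewrite -h; lra.
by apply/Rlt_le/ln_increasing; lra.
Qed.

Lemma capW_le_hidden_last j : capW a j <= capW_hidden j + capW a k0.
Proof.
rewrite /capW /capW_hidden (bigID (fun T : {set 'I_K} => k0 \notin T)) /=.
apply: Rplus_le_compat_l; rewrite big_mkcond [X in _ <= X]big_mkcond /=.
apply: Rsum_le => T _.
by case hT: (T != set0); case: (j \in T); case: (k0 \in T) => /=;
  try exact: Rle_refl; exact: (cap_ge0 hT).
Qed.

Lemma nbits_ge S : S != set0 -> INR n * cap a S - 1 <= INR (nbits a n S).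
Proof.
move=> hS; have hls : (0 < link_size a S)%N by rewrite /link_size (negbTE hS) ha.
have h : (0 < link_size a S ^ n)%coq_nat by apply/ltP; rewrite expn_gt0 hls.
have [_ /ltP] := Nat.log2_spec _ h; rewrite expn_pow -/(nbits a n S) => /ltP /lt_INR.
rewrite INR_expn2 -expn_pow pow_INR => h3.
have hapos : 0 < INR (link_size a S) by apply: lt_0_INR; apply/ltP.
have := ln_increasing _ _ (pow_lt _ n hapos) h3.
rewrite ln_pow // /exp2 ln_Rpower /link_size (negbTE hS) S_INR => h4.
have hl2 := ln2_gt0.
rewrite /cap; apply: (Rmult_le_reg_r (ln 2)) => //.
by rewrite Rmult_minus_distr_r Rmult_assoc /Rdiv Rmult_assoc Rinv_l; nra.
Qed.

Lemma sum_nbits_ge (P : pred {set 'I_K}) : (forall S, P S -> S != set0) ->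
  INR n * \big[Rplus/0]_(S | P S) cap a S - nsets <= INR (\sum_(S | P S) nbits a n S)%N.
Proof.
move=> HP; rewrite INR_sum.
apply: Rle_trans (Rsum_le (F := fun S => cap a S * INR n + - 1) _); last first.
  by move=> S PS; have := nbits_ge (HP S PS); lra.
rewrite big_split /= Rsum_const [X in _ <= X + _]Rsum_mulr Rmult_comm.
apply: Rplus_le_compat; first exact: Rle_refl.
rewrite (_ : forall x, x * -1 = - x); last by move=> x; ring.
by apply: Ropp_le_contravar; apply: leq_INR; apply: max_card.
Qed.

Lemma card_seen_positions_ge i : INR n * capW a i - nsets <= INR #|seen_positions a n i|.
Proof.
rewrite [#|_|](card_positions a n (fun S : {set 'I_K} => i \in S)).
have -> : capW a i = \big[Rplus/0]_(S : {set 'I_K} | i \in S) cap a S.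
  apply: eq_bigl => S; case iS: (i \in S); rewrite ?andbF ?andbT //.
  by apply/set0Pn; exists i.
by apply: sum_nbits_ge => S iS; apply/set0Pn; exists i.
Qed.

Lemma card_hidden_positions_ge i :
  INR n * capW_hidden i - nsets <= INR #|hidden_positions a n k0 i|.
Proof.
have -> : #|hidden_positions a n k0 i|
          = (\sum_(S | ((S != set0) && (i \in S)) && (k0 \notin S)) nbits a n S)%N.
  rewrite -card_positions; apply: eq_card => p; rewrite !inE.
  case iS: (i \in p.1); rewrite ?andbF //=.
  by have -> : p.1 != set0 by apply/set0Pn; exists i.
by apply: sum_nbits_ge => S /andP [/andP []].
Qed.

End BitsVersusCapacity.

Lemma nblocks_le m1 L : (0 < L)%N -> INR (nblocks m1 L) <= INR m1 / INR L + 1.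
Proof.
move=> hL.
have hq (x : 'I_m1) : (x %/ L < ((m1 - 1) %/ L).+1)%N.
  rewrite ltnS; apply: leq_div2r; rewrite subn1 -ltnS prednK //.
  exact: leq_ltn_trans (leq0n x) (ltn_ord x).
have h1 : (nblocks m1 L <= ((m1 - 1) %/ L).+1)%N.
  pose f (x : 'I_m1) : 'I_(((m1 - 1) %/ L).+1) := Ordinal (hq x).
  rewrite /nblocks -(@card_in_imset _ _ f); last first.
    move=> x y; rewrite !inE /block_start => /eqP hx0 /eqP hy0 /(congr1 val) /= hxy.
    by apply: val_inj; rewrite /= (divn_eq x L) (divn_eq y L) hx0 hy0 hxy.
  by rewrite -[X in (_ <= X)%N]card_ord; apply: max_card.
have hL' : 0 < INR L by apply: lt_0_INR; apply/ltP.
apply: Rle_trans (leq_INR h1) _; rewrite S_INR; apply: Rplus_le_compat_r.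
apply: (Rmult_le_reg_r (INR L)) => //; rewrite /Rdiv Rmult_assoc Rinv_l ?Rmult_1_r; last lra.
by rewrite -mult_INR; apply: leq_INR; apply: leq_trans (leq_divM _ _) (leq_subr _ _).
Qed.

Section ErrorTerms.
Variables (K : nat) (a : {set 'I_K} -> nat) (k0 : 'I_K).
Hypothesis ha : forall S : {set 'I_K}, S != set0 -> (0 < a S)%N.
Variables (r1 r2 mu e : R).
Hypotheses (mu_ge0 : 0 <= mu) (mu_le_r1 : mu <= r1) (r2_ge0 : 0 <= r2) (e_gt0 : 0 < e).

Let r1_ge0 : 0 <= r1. Proof. lra. Qed.

Lemma eventually_last_term_le : (0 < r2 -> r1 - mu + r2 < capW a k0) ->
  eventually (fun n => INR (nblocks (msg_size n r1) (msg_size n mu) * (msg_size n r2 - 1)) *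
                       / INR (2 ^ #|seen_positions a n k0|) <= e).
Proof.
move=> gap; case: (Rle_lt_or_eq_dec _ _ r2_ge0) => [r2_gt0|<-]; last first.
  by exists 0%N => n _; rewrite msg_size0 subnn muln0 /= Rmult_0_l; lra.
have hd : 0 < capW a k0 - (r1 - mu + r2) by have := gap r2_gt0; lra.
have [N HN] := eventually_exp2_decay (3 * exp2 (nsets K)) hd e_gt0.
exists N => n hn; apply: Rle_trans (HN n hn).
have [L_gt0 [L_ge _]] := msg_size_bounds n mu_ge0.
have hp := exp2_gt0 (INR n * mu).
have blocks_le : INR (nblocks (msg_size n r1) (msg_size n mu)) <= 3 * exp2 (INR n * (r1 - mu)).
  apply: Rle_trans (nblocks_le _ L_gt0) _.
  have ratio_le : INR (msg_size n r1) / INR (msg_size n mu) <= 2 * exp2 (INR n * (r1 - mu)).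
    apply: (Rmult_le_reg_r (INR (msg_size n mu))); first lra.
    rewrite /Rdiv Rmult_assoc Rinv_l ?Rmult_1_r; last lra.
    apply: Rle_trans (msg_size_le n r1_ge0) _.
    rewrite Rmult_assoc; apply: Rmult_le_compat_l; first lra.
    apply: Rle_trans (Rmult_le_compat_l _ _ _ (Rlt_le _ _ (exp2_gt0 _)) L_ge).
    by rewrite -exp2D; right; congr exp2; ring.
  have := exp2_ge1 (Rmult_le_pos _ _ (pos_INR n) (ltac:(lra) : 0 <= r1 - mu)); lra.
have := inv_INR_expn2_le_exp2 (card_seen_positions_ge n ha k0).
have := msg_size_pred_le n r2_ge0.
rewrite mult_INR => m2_le inv_le.
apply: Rle_trans (Rmult_le_compat _ _ _ _ _ _
  (Rmult_le_compat _ _ _ _ (pos_INR _) (pos_INR _) blocks_le m2_le) inv_le) _.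
- by apply: Rmult_le_pos; apply: pos_INR.
- exact/Rlt_le/Rinv_0_lt_compat/INR_expn2_gt0.
by rewrite !Rmult_assoc -!exp2D; right; congr (3 * exp2 _); ring.
Qed.

Lemma eventually_joint_term_le j : (0 < r1 + r2 -> r1 + r2 < capW a j) ->
  eventually (fun n => INR (msg_size n r1 * msg_size n r2 - 1) *
                       / INR (2 ^ #|seen_positions a n j|) <= e).
Proof.
move=> gap; case: (Rle_lt_or_eq_dec 0 (r1 + r2)) => [|r_gt0|r_eq0]; first lra; last first.
  have [-> ->] : r1 = 0 /\ r2 = 0 by lra.
  by exists 0%N => n _; rewrite !msg_size0 /= Rmult_0_l; lra.
have hd : 0 < capW a j - (r1 + r2) by have := gap r_gt0; lra.
have [N HN] := eventually_exp2_decay (4 * exp2 (nsets K)) hd e_gt0.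
exists N => n hn; apply: Rle_trans (HN n hn).
have msgs_le : INR (msg_size n r1 * msg_size n r2 - 1) <= 4 * exp2 (INR n * (r1 + r2)).
  apply: Rle_trans (leq_INR (leq_subr 1 _)) _; rewrite mult_INR.
  apply: Rle_trans (Rmult_le_compat _ _ _ _ (pos_INR _) (pos_INR _)
    (msg_size_le n r1_ge0) (msg_size_le n r2_ge0)) _.
  by rewrite Rmult_plus_distr_l exp2D; right; ring.
have := inv_INR_expn2_le_exp2 (card_seen_positions_ge n ha j) => inv_le.
apply: Rle_trans (Rmult_le_compat _ _ _ _ (pos_INR _) _ msgs_le inv_le) _.
  exact/Rlt_le/Rinv_0_lt_compat/INR_expn2_gt0.
by rewrite !Rmult_assoc -!exp2D; right; congr (_ * (_ * exp2 _)); ring.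
Qed.

Lemma eventually_hidden_term_le j : (0 < mu -> mu < capW_hidden a k0 j) ->
  eventually (fun n => INR (msg_size n mu - 1) * / INR (2 ^ #|hidden_positions a n k0 j|) <= e).
Proof.
move=> gap; case: (Rle_lt_or_eq_dec _ _ mu_ge0) => [mu_gt0|<-]; last first.
  by exists 0%N => n _; rewrite msg_size0 /= Rmult_0_l; lra.
have hd : 0 < capW_hidden a k0 j - mu by have := gap mu_gt0; lra.
have [N HN] := eventually_exp2_decay (exp2 (nsets K)) hd e_gt0.
exists N => n hn; apply: Rle_trans (HN n hn).
have := inv_INR_expn2_le_exp2 (card_hidden_positions_ge n k0 ha j) => inv_le.
apply: Rle_trans (Rmult_le_compat _ _ _ _ (pos_INR _) _ (msg_size_pred_le n mu_ge0) inv_le) _.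
  exact/Rlt_le/Rinv_0_lt_compat/INR_expn2_gt0.
by rewrite -!exp2D; right; congr exp2; ring.
Qed.

End ErrorTerms.

Lemma union_bound_le K (a : {set 'I_K} -> nat) n m1 m2 L (k0 : 'I_K) e :
  INR (nblocks m1 L * (m2 - 1)) * / INR (2 ^ #|seen_positions a n k0|) <= e ->
  (forall j, j != k0 -> INR (m1 * m2 - 1) * / INR (2 ^ #|seen_positions a n j|) <= e) ->
  (forall j, j != k0 -> INR (L - 1) * / INR (2 ^ #|hidden_positions a n k0 j|) <= e) ->
  union_bound a n m1 m2 L k0 <= (2 * INR K + 1) * e.
Proof.
move=> last_le joint_le hidden_le.
have e_ge0 : 0 <= e.
  apply: Rle_trans last_le; apply: Rmult_le_pos; first exact: pos_INR.
  exact/Rlt_le/Rinv_0_lt_compat/INR_expn2_gt0.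
apply: Rle_trans (Rplus_le_compat _ _ _ _ last_le (Rsum_le (G := fun _ => e + e)
  (fun j hj => Rplus_le_compat _ _ _ _ (joint_le j hj) (hidden_le j hj)))) _.
rewrite Rsum_const.
have : INR #|[pred j : 'I_K | j != k0]| <= INR K.
  by apply: leq_INR; rewrite -[X in (_ <= X)%N]card_ord; apply: max_card.
move: (INR #|_|) => c; nra.
Qed.

Lemma achievable_of_split K (a : {set 'I_K} -> nat) (k0 : 'I_K)
  (ha : forall S : {set 'I_K}, S != set0 -> (0 < a S)%N)
  (last_is_k0 : forall i : 'I_K, is_last i = (i == k0)) r1 r2 mu :
  0 <= mu -> mu <= r1 -> 0 <= r2 ->
  (0 < r2 -> r1 - mu + r2 < capW a k0) ->
  (forall j, j != k0 -> 0 < r1 + r2 -> r1 + r2 < capW a j) ->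
  (forall j, j != k0 -> 0 < mu -> mu < capW_hidden a k0 j) ->
  achievable a r1 r2.
Proof.
move=> mu_ge0 mu_le r2_ge0 gap_last gap_joint gap_hidden.
split; [lra | split; [lra | move=> eps eps_gt0]].
pose e := eps / (2 * INR K + 1).
have e_gt0 : 0 < e by apply: Rdiv_lt_0_compat; have := pos_INR K; lra.
have joint : eventually (fun n => forall j : 'I_K, j != k0 ->
    INR (msg_size n r1 * msg_size n r2 - 1) * / INR (2 ^ #|seen_positions a n j|) <= e).
  apply: eventually_forall => j; case: (eqVneq j k0) => [->|nj]; first by exists 0%N.
  have [N HN] := eventually_joint_term_le ha mu_ge0 mu_le r2_ge0 e_gt0 (gap_joint j nj).
  by exists N => n hn _; apply: HN.
have hidden : eventually (fun n => forall j : 'I_K, j != k0 ->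
    INR (msg_size n mu - 1) * / INR (2 ^ #|hidden_positions a n k0 j|) <= e).
  apply: eventually_forall => j; case: (eqVneq j k0) => [->|nj]; first by exists 0%N.
  have [N HN] := eventually_hidden_term_le ha mu_ge0 e_gt0 (gap_hidden j nj).
  by exists N => n hn _; apply: HN.
have [N HN] := eventually_and
  (eventually_last_term_le ha mu_ge0 mu_le r2_ge0 e_gt0 gap_last) (eventually_and joint hidden).
exists N => n hn; have [last_le [joint_le hidden_le]] := HN n hn.
have [m1_gt0 _] := msg_size_bounds n (Rle_trans _ _ _ mu_ge0 mu_le).
have [m2_gt0 _] := msg_size_bounds n r2_ge0.
have [L_gt0 _] := msg_size_bounds n mu_ge0.
have [R [err_le [obs1 obs2]]] :=
  good_code_exists n m1_gt0 m2_gt0 L_gt0 last_is_k0 (link_size_gt0 ha).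
do 3 eexists; split; first exact: obs1; split; first exact: obs2.
apply: Rle_trans err_le (Rle_trans _ _ _ (union_bound_le last_le joint_le hidden_le) _).
by right; rewrite /e; field; have := pos_INR K; lra.
Qed.

Section ReceiverView.
Variables (K : nat) (a : {set 'I_K} -> nat) (n : nat) (i : 'I_K).
Hypothesis ha : forall S : {set 'I_K}, S != set0 -> (0 < a S)%N.

(* What receiver i observes, as a finite type: links not seen by i are
   collapsed to a one-letter alphabet. *)
Definition seen_size (S : {set 'I_K}) := if i \in S then link_size a S else 1%N.

Lemma seen_size_gt0 S : (0 < seen_size S)%N.
Proof. by rewrite /seen_size; case: ifP => // _; apply: link_size_gt0. Qed.

Definition view := {dffun forall S : {set 'I_K}, {ffun 'I_n -> 'I_(seen_size S)}}.

Definition view_of (x : chan_block a n) : view :=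
  [ffun S => [ffun t => Ordinal (ltn_pmod (x S t) (seen_size_gt0 S))]].

Lemma view_of_agree x y : view_of x = view_of y ->
  forall (S : {set 'I_K}) (t : 'I_n), i \in S -> x S t = y S t.
Proof.
move=> E S t iS; have := congr1 (fun f : view => f S t) E; rewrite !ffunE.
by move/(congr1 val) => /=; rewrite !modn_small ?/seen_size ?iS //; move/val_inj.
Qed.

Lemma card_view : INR #|{: view}| = exp2 (INR n * capW a i).
Proof.
rewrite card_dep_ffun foldrE big_image /=.
have -> : capW a i = \big[Rplus/0]_(S : {set 'I_K}) (if i \in S then cap a S else 0).
  rewrite /capW -big_mkcond /=; apply: eq_bigl => S.
  case iS: (i \in S); rewrite ?andbF ?andbT //.
  by apply/set0Pn; exists i.
rewrite -Rmult_comm -Rsum_mulr.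
apply: (big_ind2 (fun (x : nat) (y : R) => INR x = exp2 y)).
- by rewrite /exp2 Rpower_O //; lra.
- by move=> x1 x2 y1 y2 h1 h2; rewrite mult_INR h1 h2 exp2D.
move=> S _; rewrite card_ffun !card_ord /seen_size.
case iS: (i \in S); last by rewrite exp1n Rmult_0_l /exp2 Rpower_O //=; lra.
have hS : S != set0 by apply/set0Pn; exists i.
have hpos : 0 < INR (a S) by apply: lt_0_INR; apply/ltP; apply: ha.
rewrite /link_size (negbTE hS) -expn_pow pow_INR -Rpower_pow // /exp2 /Rpower /cap.
by congr exp; field; have := ln2_gt0; lra.
Qed.

End ReceiverView.

Section Converse.
Variables (K : nat) (a : {set 'I_K} -> nat) (n m1 m2 : nat).
Hypothesis ha : forall S : {set 'I_K}, S != set0 -> (0 < a S)%N.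
Variables (enc : 'I_m1 -> 'I_m2 -> chan_block a n)
  (d1 : 'I_K -> chan_block a n -> 'I_m1) (d2 : 'I_K -> chan_block a n -> 'I_m2).

Definition err_set := [set w : 'I_m1 * 'I_m2 |
  [exists i : 'I_K, ((~~ is_last i) && (d1 i (enc w.1 w.2) != w.1))
                    || (d2 i (enc w.1 w.2) != w.2)]].

Lemma correct_decoding w i : w \in ~: err_set ->
  d2 i (enc w.1 w.2) = w.2 /\ (~~ is_last i -> d1 i (enc w.1 w.2) = w.1).
Proof.
rewrite !inE => /existsPn /(_ i); rewrite negb_or => /andP [h1 /negPn /eqP h2].
by split => // nl; move: h1; rewrite nl /= => /negPn /eqP.
Qed.

Lemma card_correct_ge : err_prob enc d1 d2 <= 1 / 2 ->
  INR (m1 * m2) <= 2 * INR #|~: err_set|.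
Proof.
have split_msgs : (n_errors enc d1 d2 + #|~: err_set| = m1 * m2)%N.
  by rewrite /n_errors -/err_set cardsC card_prod !card_ord.
move: (split_msgs) => /(congr1 INR); rewrite plus_INR => E.
rewrite /err_prob; case: (posnP (m1 * m2)) => [-> _ | m_gt0 err_le].
  by have := pos_INR #|~: err_set|; simpl; lra.
have hm : 0 < INR (m1 * m2) by apply: lt_0_INR; apply/ltP.
have := Rmult_le_compat_r _ _ _ (Rlt_le _ _ hm) err_le.
by rewrite /Rdiv Rmult_assoc Rinv_l ?Rmult_1_r; lra.
Qed.

Lemma card_correct_le_last i : observes i (d2 i) ->
  (#|~: err_set| <= m1 * #|{: view a n i}|)%N.
Proof.
move=> obs2; pose f (w : 'I_m1 * 'I_m2) := (w.1, view_of i ha (enc w.1 w.2)).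
rewrite -(@card_in_imset _ _ f); last first.
  move=> [x1 x2] [y1 y2] hx hy [e1 e2]; subst y1.
  have [/= hx2 _] := correct_decoding i hx; have [/= hy2 _] := correct_decoding i hy.
  by rewrite -hx2 -hy2; congr pair; apply: obs2; apply: view_of_agree e2.
by rewrite -[X in (_ <= X * _)%N]card_ord -card_prod; exact: max_card.
Qed.

Lemma card_correct_le i : ~~ is_last i -> observes i (d1 i) -> observes i (d2 i) ->
  (#|~: err_set| <= #|{: view a n i}|)%N.
Proof.
move=> nl obs1 obs2; pose f (w : 'I_m1 * 'I_m2) := view_of i ha (enc w.1 w.2).
rewrite -(@card_in_imset _ _ f); last first.
  move=> [x1 x2] [y1 y2] hx hy /view_of_agree E.
  have [/= hx2 /(_ nl) /= hx1] := correct_decoding i hx.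
  have [/= hy2 /(_ nl) /= hy1] := correct_decoding i hy.
  by move: (obs1 _ _ E) (obs2 _ _ E); rewrite hx1 hy1 hx2 hy2 => -> ->.
exact: max_card.
Qed.

End Converse.

Lemma achievable_common_le K (a : {set 'I_K} -> nat)
  (ha : forall S : {set 'I_K}, S != set0 -> (0 < a S)%N) r1 r2 (i : 'I_K) :
  achievable a r1 r2 -> r2 <= capW a i.
Proof.
move=> [r1_ge0 [r2_ge0 good]]; apply: le_of_exp2_le2.
have [N HN] := good (1 / 2) ltac:(lra); exists N => n hn.
have [enc [d1 [d2 [_ [obs2 err_le]]]]] := HN n hn.
have := leq_INR (card_correct_le_last ha enc d1 (obs2 i)).
rewrite mult_INR (card_view _ _ ha) => correct_le.
have := card_correct_ge err_le; rewrite mult_INR => correct_ge.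
have [/ltP/lt_0_INR m1_gt0 _] := msg_size_bounds n r1_ge0.
have [_ [m2_ge _]] := msg_size_bounds n r2_ge0.
nra.
Qed.

Lemma achievable_sum_le K (a : {set 'I_K} -> nat)
  (ha : forall S : {set 'I_K}, S != set0 -> (0 < a S)%N) r1 r2 (i : 'I_K) :
  ~~ is_last i -> achievable a r1 r2 -> r2 + r1 <= capW a i.
Proof.
move=> nl [r1_ge0 [r2_ge0 good]]; apply: le_of_exp2_le2.
have [N HN] := good (1 / 2) ltac:(lra); exists N => n hn.
have [enc [d1 [d2 [obs1 [obs2 err_le]]]]] := HN n hn.
have := leq_INR (card_correct_le ha enc nl (obs1 i) (obs2 i)).
rewrite (card_view _ _ ha) => correct_le.
have := card_correct_ge err_le; rewrite mult_INR => correct_ge.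
have [_ [m1_ge _]] := msg_size_bounds n r1_ge0.
have [_ [m2_ge _]] := msg_size_bounds n r2_ge0.
have := exp2_gt0 (INR n * r1); have := exp2_gt0 (INR n * r2).
rewrite Rmult_plus_distr_l exp2D; nra.
Qed.

Lemma le_of_forall_lt_add x y : (forall d, 0 < d -> x < y + d) -> x <= y.
Proof. by move=> H; apply: Rnot_lt_le => h; have := H (x - y) ltac:(lra); lra. Qed.

Lemma capacity_region_sub K (a : {set 'I_K} -> nat)
  (ha : forall S : {set 'I_K}, S != set0 -> (0 < a S)%N) R1 R2 :
  in_capacity_region a R1 R2 ->
  0 <= R1 /\ 0 <= R2 /\ (forall k, is_last k -> R2 <= capW a k) /\
  (forall j, ~~ is_last j -> R2 + R1 <= capW a j).
Proof.
move=> H; split; [|split; [|split]].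
- apply: Rnot_lt_le => h; have [r1 [r2 [[r1_ge0 _] [close1 _]]]] := H (- R1) ltac:(lra).
  by have := Rabs_def2 _ _ close1; lra.
- apply: Rnot_lt_le => h; have [r1 [r2 [[_ [r2_ge0 _]] [_ close2]]]] := H (- R2) ltac:(lra).
  by have := Rabs_def2 _ _ close2; lra.
- move=> k _; apply: le_of_forall_lt_add => d hd.
  have [r1 [r2 [ach [_ close2]]]] := H d hd.
  by have := achievable_common_le ha k ach; have := Rabs_def2 _ _ close2; lra.
- move=> j nl; apply: le_of_forall_lt_add => d hd.
  have [r1 [r2 [ach [close1 close2]]]] := H (d / 2) ltac:(lra).
  have := achievable_sum_le ha nl ach.
  by have := Rabs_def2 _ _ close1; have := Rabs_def2 _ _ close2; lra.
Qed.

Lemma is_lastE K (k0 : 'I_K) : is_last k0 -> forall i, is_last i = (i == k0).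
Proof. by move=> /eqP k0E i; rewrite /is_last -k0E. Qed.

(* Shrinking the rates by t < 1 makes every inequality of the region strict
   wherever it matters; mu is the smallest rate that must be hidden from the
   last receiver. *)
Lemma achievable_scaled K (a : {set 'I_K} -> nat)
  (ha : forall S : {set 'I_K}, S != set0 -> (0 < a S)%N) (k0 : 'I_K) R1 R2 t :
  is_last k0 -> 0 <= R1 -> 0 <= R2 -> 0 < t < 1 -> R2 <= capW a k0 ->
  (forall j, ~~ is_last j -> R2 + R1 <= capW a j) ->
  achievable a (t * R1) (t * R2).
Proof.
move=> /is_lastE last_k0 R1_ge0 R2_ge0 t_bounds capK capj.
pose mu := Rmax 0 (t * (R1 + R2 - capW a k0)).
have mu_ge0 : 0 <= mu := Rmax_l _ _.
have mu_ge : t * (R1 + R2 - capW a k0) <= mu := Rmax_r _ _.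
apply: (achievable_of_split ha last_k0 (mu := mu)) => //.
- by apply: Rmax_lub; nra.
- by nra.
- move=> R2_gt0; have : 0 < capW a k0 by nra.
  nra.
- by move=> j nj hp; have := capj j ltac:(by rewrite last_k0); nra.
- move=> j nj hp.
  have muE : mu = t * (R1 + R2 - capW a k0).
    by move: hp; rewrite /mu /Rmax; case: Rle_dec => //; lra.
  have := capj j ltac:(by rewrite last_k0); have := capW_le_hidden_last k0 ha j; nra.
Qed.

Lemma capacity_region_sup K (a : {set 'I_K} -> nat)
  (ha : forall S : {set 'I_K}, S != set0 -> (0 < a S)%N) (k0 : 'I_K) R1 R2 :
  is_last k0 -> 0 <= R1 -> 0 <= R2 -> R2 <= capW a k0 ->
  (forall j, ~~ is_last j -> R2 + R1 <= capW a j) ->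
  in_capacity_region a R1 R2.
Proof.
move=> last_k0 R1_ge0 R2_ge0 capK capj delta delta_gt0.
pose t := (R1 + R2 + 1) / (R1 + R2 + 1 + delta).
have t_gt0 : 0 < t by apply: Rdiv_lt_0_compat; lra.
have t_lt1 : t < 1.
  apply: (Rmult_lt_reg_r (R1 + R2 + 1 + delta)); first lra.
  by rewrite /t /Rdiv Rmult_assoc Rinv_l; lra.
have one_sub_t : 1 - t = delta / (R1 + R2 + 1 + delta) by rewrite /t; field; lra.
have close x : 0 <= x <= R1 + R2 -> Rabs (t * x - x) < delta.
  move=> hx; rewrite Rabs_left1; last by nra.
  have -> : - (t * x - x) = x * (1 - t) by ring.
  rewrite one_sub_t /Rdiv -Rmult_assoc; apply: (Rmult_lt_reg_r (R1 + R2 + 1 + delta)); first lra.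
  by rewrite Rmult_assoc Rinv_l; nra.
exists (t * R1), (t * R2); split; last by split; apply: close; lra.
by apply: (achievable_scaled ha last_k0) => //; lra.
Qed.

Theorem proposition2 (K : nat) (a : {set 'I_K} -> nat)
  (hK : (2 <= K)%nat)
  (ha : forall S : {set 'I_K}, S != set0 -> (0 < a S)%nat)
  (R1 R2 : R) :
  in_capacity_region a R1 R2 <->
  (Rle 0 R1 /\ Rle 0 R2 /\
   (forall k : 'I_K, is_last k -> Rle R2 (capW a k)) /\
   (forall j : 'I_K, ~~ is_last j -> Rle (Rplus R2 R1) (capW a j))).
Proof.
split=> [|[R1_ge0 [R2_ge0 [capK capj]]]]; first exact: capacity_region_sub.
have k0_lt : (K.-1 < K)%N by rewrite ltn_predL; apply: leq_trans hK.
have last_k0 : is_last (Ordinal k0_lt) by apply/eqP.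
by apply: (capacity_region_sup ha last_k0) => //; apply: capK.
Qed.
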